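(* Consider the binary model. (a) For every $n\ge2$ and all $\mathbf{x},\mathbf{y},\mathbf{v}\in\mathbb{R}^{2n-1}$, \[ \|[F'(\mathbf{x})-F'(\mathbf{y})]\mathbf{v}\|_\infty\le (n-1)\|\mathbf{x}-\mathbf{y}\|_\infty\|\mathbf{v}\|_\infty,\qquad \max_{i=1,\dots,2n-1}\|F_i'(\mathbf{x})-F_i'(\mathbf{y})\|_\infty\le \frac{n-1}{2}\|\mathbf{x}-\mathbf{y}\|_\infty . \] (b) There are absolute constants $c_{11},c_{12}>0$ such that the following holds: let $\boldsymbol\theta^*=\boldsymbol\theta^*_n\in\mathbb{R}^{2n-1}$ satisfy $e^{2\|\boldsymbol\theta^*\|_\infty}=o(n)$. Then for all sufficiently large $n$, whenever the realized degrees satisfy \[ \max\Bigl\{\max_{1\le i\le n}|d_i-\mathbb{E}_{\boldsymbol\theta^*}d_i|,\ \max_{1\le j\le n}|b_j-\mathbb{E}_{\boldsymbol\theta^*}b_j|\Bigr\}\le\sqrt{(n-1)\log(n-1)}, \] one has \[ r:=\bigl\|[F'(\boldsymbol\theta^* )]^{-1}F(\boldsymbol\theta^* )\bigr\|_\infty\le \frac{(\log n)^{1/2}}{n^{1/2}}\Bigl(c_{11}e^{6\|\boldsymbol\theta^*\|_\infty}+c_{12}e^{2\|\boldsymbol\theta^*\|_\infty}\Bigr). \]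
   Context: Binary model: Let $n\ge2$. For $\boldsymbol\theta=(\alpha_1,\dots,\alpha_n,\beta_1,\dots,\beta_{n-1})^\top\in\mathbb{R}^{2n-1}$ set $\beta_n=0$, and let $\mathbb{P}_{\boldsymbol\theta}$ be the law of a random $n\times n$ matrix $A=(a_{i,j})$ with $a_{i,i}=0$ and $a_{i,j}$ ($i\ne j$) mutually independent Bernoulli with $\mathbb{P}(a_{i,j}=1)=e^{\alpha_i+\beta_j}/(1+e^{\alpha_i+\beta_j})$. Out-degrees $d_i=\sum_{j\ne i}a_{i,j}$, in-degrees $b_j=\sum_{i\ne j}a_{i,j}$. Let $f(x)=e^x/(1+e^x)$ and define $F:\mathbb{R}^{2n-1}\to\mathbb{R}^{2n-1}$ by $F_i(\boldsymbol\theta)=d_i-\sum_{k\ne i}f(\alpha_i+\beta_k)$ for $i=1,\dots,n$ and $F_{n+j}(\boldsymbol\theta)=b_j-\sum_{k\ne j}f(\alpha_k+\beta_j)$ for $j=1,\dots,n-1$ (always with $\beta_n=0$). $F'(\boldsymbol\theta)$ is the Jacobian matrix of $F$ and $F_i'(\boldsymbol\theta)$ the gradient of $F_i$. $\|\cdot\|_\infty$ is the max-norm of vectors. *)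

From Stdlib Require Import Reals Lra Lia List.
Import ListNotations.
Open Scope R_scope.

(* Vectors in R^m are functions nat -> R, only indices 0..m-1 matter.
   Parameter theta in R^{2n-1}: indices 0..n-1 are alpha_1..alpha_n,
   indices n..2n-2 are beta_1..beta_{n-1}; beta_n = 0. *)

Definition sumR (m : nat) (g : nat -> R) : R :=
  fold_right Rplus 0 (map g (seq 0 m)).

Definition norm_inf (m : nat) (v : nat -> R) : R :=
  fold_right Rmax 0 (map (fun i => Rabs (v i)) (seq 0 m)).

Definition logistic (x : R) : R := exp x / (1 + exp x).

Definition alpha (theta : nat -> R) (i : nat) : R := theta i.
Definition beta (n : nat) (theta : nat -> R) (j : nat) : R :=
  if Nat.ltb j (n - 1) then theta (n + j)%nat else 0.

Definition ind (b : bool) : R := if b then 1 else 0.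

Definition outdeg (n : nat) (a : nat -> nat -> bool) (i : nat) : R :=
  sumR n (fun j => if Nat.eqb j i then 0 else ind (a i j)).
Definition indeg (n : nat) (a : nat -> nat -> bool) (j : nat) : R :=
  sumR n (fun i => if Nat.eqb i j then 0 else ind (a i j)).

(* Expectations of degrees under P_theta (linearity of expectation:
   E d_i = sum_{j<>i} P(a_ij = 1) = sum_{j<>i} f(alpha_i + beta_j)). *)
Definition Eoutdeg (n : nat) (theta : nat -> R) (i : nat) : R :=
  sumR n (fun k => if Nat.eqb k i then 0
                   else logistic (alpha theta i + beta n theta k)).
Definition Eindeg (n : nat) (theta : nat -> R) (j : nat) : R :=
  sumR n (fun k => if Nat.eqb k j then 0
                   else logistic (alpha theta k + beta n theta j)).

Definition Fmap (n : nat) (a : nat -> nat -> bool) (theta : nat -> R) (i : nat) : R :=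
  if Nat.ltb i n then outdeg n a i - Eoutdeg n theta i
  else indeg n a (i - n) - Eindeg n theta (i - n).

Definition upd (x : nat -> R) (k : nat) (t : R) : nat -> R :=
  fun j => if Nat.eqb j k then t else x j.

Definition is_jacobian (m : nat) (G : (nat -> R) -> nat -> R) (x : nat -> R)
  (J : nat -> nat -> R) : Prop :=
  forall i k, (i < m)%nat -> (k < m)%nat ->
    derivable_pt_lim (fun t => G (upd x k t) i) (x k) (J i k).

Definition matvec (m : nat) (J : nat -> nat -> R) (v : nat -> R) : nat -> R :=
  fun i => sumR m (fun k => J i k * v k).

Definition vsub (x y : nat -> R) : nat -> R := fun i => x i - y i.

Definition invertible (m : nat) (J : nat -> nat -> R) : Prop :=
  forall v, (forall i, (i < m)%nat -> matvec m J v i = 0) ->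
            forall i, (i < m)%nat -> v i = 0.

(** (a) The Jacobian entries of [F] are [-f'(alpha_i + beta_k)] times
    0/1 coefficients, and [f' = f (1 - f)] is [1/4]-Lipschitz because
    [|f''| = |f' (1 - 2 f)| <= 1/4]; each row has [n - 1] such entries.

    (b) Writing [u] and [y = - beta] for the two halves of a vector [v] (so
    [y_n = 0]), [J v] is, up to sign, the weighted Laplacian of the complete
    bipartite graph minus a perfect matching, with weights
    [f'(alpha_i + beta_k)] in [[m, 1/4]], [m = e^{-2 |theta|}/4].  The one
    equation missing from [J v] (the last in-degree) is recovered from
    [sum_i d_i = sum_j b_j].  Comparing the equations at the coordinates where
    [max (u, y)] and [min (u, y)] are attained gives the discrete maximum
    principle [m (n - 2) (max - min) <= 2 B + B / (4 m)] whenever all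
    equations are bounded by [B]; as [y_n = 0], this bounds [|v|_oo].  With
    [B = sqrt ((n - 1) log (n - 1))] this gives the rate of (b) with
    [c11 = 12], [c12 = 24], already for every [n >= 3]. *)

From Stdlib Require Import Reals Lra Lia List FunctionalExtensionality.
Open Scope R_scope.

Lemma fold_right_Rplus_acc (l : list R) x :
  fold_right Rplus x l = fold_right Rplus 0 l + x.
Proof. induction l; simpl; [lra | rewrite IHl; lra]. Qed.

Lemma sumR_0 g : sumR 0 g = 0.
Proof. reflexivity. Qed.

Lemma sumR_S m g : sumR (S m) g = sumR m g + g m.
Proof.
  unfold sumR. rewrite seq_S, map_app, fold_right_app. simpl.
  rewrite fold_right_Rplus_acc. lra.
Qed.

Lemma sumR_pred m g : (1 <= m)%nat -> sumR m g = sumR (m - 1) g + g (m - 1)%nat.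
Proof. intros Hm. destruct m as [|m]; [lia|]. rewrite sumR_S. simpl. now rewrite Nat.sub_0_r. Qed.

Lemma sumR_ext m f g : (forall k, (k < m)%nat -> f k = g k) -> sumR m f = sumR m g.
Proof. induction m; intros H; [reflexivity|]. rewrite !sumR_S, IHm, H; auto. Qed.

Lemma sumR_plus m f g : sumR m (fun k => f k + g k) = sumR m f + sumR m g.
Proof. induction m; [rewrite !sumR_0; lra|]. rewrite !sumR_S, IHm; lra. Qed.

Lemma sumR_minus m f g : sumR m (fun k => f k - g k) = sumR m f - sumR m g.
Proof. induction m; [rewrite !sumR_0; lra|]. rewrite !sumR_S, IHm; lra. Qed.

Lemma sumR_opp m f : sumR m (fun k => - f k) = - sumR m f.
Proof. induction m; [rewrite !sumR_0; lra|]. rewrite !sumR_S, IHm; lra. Qed.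

Lemma sumR_scal_l m c f : sumR m (fun k => c * f k) = c * sumR m f.
Proof. induction m; [rewrite !sumR_0; lra|]. rewrite !sumR_S, IHm; lra. Qed.

Lemma sumR_scal_r m c f : sumR m (fun k => f k * c) = sumR m f * c.
Proof. induction m; [rewrite !sumR_0; lra|]. rewrite !sumR_S, IHm; lra. Qed.

Lemma sumR_const m c : sumR m (fun _ => c) = INR m * c.
Proof. induction m; [rewrite sumR_0; simpl; lra|]. rewrite sumR_S, IHm, S_INR; lra. Qed.

Lemma sumR_eq_0 m f : (forall k, (k < m)%nat -> f k = 0) -> sumR m f = 0.
Proof. intros H. rewrite (sumR_ext m f (fun _ => 0)) by auto. rewrite sumR_const; lra. Qed.

Lemma sumR_le m f g : (forall k, (k < m)%nat -> f k <= g k) -> sumR m f <= sumR m g.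
Proof.
  induction m; intros H; [rewrite !sumR_0; lra|]. rewrite !sumR_S.
  assert (f m <= g m) by (apply H; lia).
  assert (sumR m f <= sumR m g) by (apply IHm; intros; apply H; lia). lra.
Qed.

Lemma sumR_abs m f : Rabs (sumR m f) <= sumR m (fun k => Rabs (f k)).
Proof.
  induction m; [rewrite !sumR_0, Rabs_R0; lra|]. rewrite !sumR_S.
  eapply Rle_trans; [apply Rabs_triang|]. lra.
Qed.

Lemma sumR_comm m p f :
  sumR m (fun i => sumR p (fun k => f i k)) = sumR p (fun k => sumR m (fun i => f i k)).
Proof.
  induction m.
  - rewrite sumR_0. symmetry. now apply sumR_eq_0.
  - rewrite sumR_S, IHm, <- sumR_plus. apply sumR_ext. intros. now rewrite sumR_S.
Qed.

Lemma sumR_delta m a v : (a < m)%nat -> sumR m (fun p => ind (Nat.eqb a p) * v p) = v a.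
Proof.
  induction m; intros H; [lia|]. rewrite sumR_S. destruct (Nat.eq_dec a m).
  - subst. rewrite Nat.eqb_refl, sumR_eq_0; [unfold ind; lra|].
    intros k Hk. destruct (Nat.eqb_spec m k); [lia|]. unfold ind; lra.
  - rewrite IHm by lia. destruct (Nat.eqb_spec a m); [lia|]. unfold ind; lra.
Qed.

Lemma sumR_skip m i g : (i < m)%nat ->
  sumR m (fun k => if Nat.eqb k i then 0 else g k) = sumR m g - g i.
Proof.
  induction m; intros H; [lia|]. rewrite !sumR_S. destruct (Nat.eq_dec i m).
  - subst. rewrite Nat.eqb_refl, (sumR_ext m _ g); [lra|].
    intros k Hk. destruct (Nat.eqb_spec k m); [lia | auto].
  - rewrite IHm by lia. destruct (Nat.eqb_spec m i); [lia|]. lra.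
Qed.

Lemma sumR_skip_plus m i f g :
  sumR m (fun k => if Nat.eqb k i then 0 else f k + g k) =
  sumR m (fun k => if Nat.eqb k i then 0 else f k) + sumR m (fun k => if Nat.eqb k i then 0 else g k).
Proof. rewrite <- sumR_plus. apply sumR_ext. intros. destruct (Nat.eqb k i); ring. Qed.

Lemma sumR_skip_minus m i f g :
  sumR m (fun k => if Nat.eqb k i then 0 else f k) - sumR m (fun k => if Nat.eqb k i then 0 else g k)
  = sumR m (fun k => if Nat.eqb k i then 0 else f k - g k).
Proof. rewrite <- sumR_minus. apply sumR_ext. intros. destruct (Nat.eqb k i); ring. Qed.

Lemma sumR_skip_abs_le m i g C : (i < m)%nat ->
  (forall k, (k < m)%nat -> k <> i -> Rabs (g k) <= C) ->
  Rabs (sumR m (fun k => if Nat.eqb k i then 0 else g k)) <= INR (m - 1) * C.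
Proof.
  intros Hi H. eapply Rle_trans; [apply sumR_abs|].
  eapply Rle_trans.
  - apply (sumR_le _ _ (fun k => if Nat.eqb k i then 0 else C)).
    intros k Hk. destruct (Nat.eqb_spec k i); [rewrite Rabs_R0; lra | auto].
  - rewrite sumR_skip, sumR_const, minus_INR by lia. simpl. lra.
Qed.

Lemma fold_right_Rmax_ge0 (l : list R) : 0 <= fold_right Rmax 0 l.
Proof. induction l; simpl; [lra|]. eapply Rle_trans; [apply IHl | apply Rmax_r]. Qed.

Lemma norm_inf_ge0 m v : 0 <= norm_inf m v.
Proof. apply fold_right_Rmax_ge0. Qed.

Lemma norm_inf_ge m v i : (i < m)%nat -> Rabs (v i) <= norm_inf m v.
Proof.
  intros Hi. unfold norm_inf.
  assert (Hin : In (Rabs (v i)) (map (fun i => Rabs (v i)) (seq 0 m)))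
    by (apply (in_map (fun i => Rabs (v i))), in_seq; lia).
  induction (map (fun i => Rabs (v i)) (seq 0 m)) as [|x l IH]; simpl in *; [tauto|].
  destruct Hin as [<- | Hin]; [apply Rmax_l|].
  eapply Rle_trans; [apply IH, Hin | apply Rmax_r].
Qed.

Lemma norm_inf_le m v C : 0 <= C -> (forall i, (i < m)%nat -> Rabs (v i) <= C) ->
  norm_inf m v <= C.
Proof.
  intros HC H. unfold norm_inf.
  assert (Hl : forall x, In x (map (fun i => Rabs (v i)) (seq 0 m)) -> x <= C).
  { intros x Hx. apply in_map_iff in Hx. destruct Hx as [i [<- Hi]].
    apply in_seq in Hi. apply H; lia. }
  induction (map (fun i => Rabs (v i)) (seq 0 m)) as [|x l IH]; simpl; [lra|].
  apply Rmax_lub; auto with datatypes.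
Qed.

Lemma exists_argmax f n : (0 < n)%nat ->
  exists p, (p < n)%nat /\ forall k, (k < n)%nat -> f k <= f p.
Proof.
  induction n as [|n IH]; intros H; [lia|]. destruct n.
  - exists 0%nat. split; [lia|]. intros k Hk. replace k with 0%nat by lia. lra.
  - destruct IH as [p [Hp Hk]]; [lia|]. destruct (Rle_dec (f (S n)) (f p)).
    + exists p. split; [lia|]. intros k Hk'.
      destruct (Nat.eq_dec k (S n)); [subst; auto | apply Hk; lia].
    + exists (S n). split; [lia|]. intros k Hk'.
      destruct (Nat.eq_dec k (S n)); [subst; lra|]. specialize (Hk k ltac:(lia)). lra.
Qed.

Definition dlogistic (x : R) : R := exp x / ((1 + exp x) * (1 + exp x)).

Lemma derivable_pt_lim_logistic x : derivable_pt_lim logistic x (dlogistic x).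
Proof.
  assert (Hp := exp_pos x).
  assert (H1 : derivable_pt_lim (fun t => 1 + exp t) x (exp x)).
  { replace (exp x) with (0 + exp x) by ring.
    apply (derivable_pt_lim_plus (fct_cte 1) exp);
      [apply derivable_pt_lim_const | apply derivable_pt_lim_exp]. }
  assert (H := derivable_pt_lim_div exp (fun t => 1 + exp t) x (exp x) (exp x)
                 (derivable_pt_lim_exp x) H1 ltac:(lra)).
  unfold logistic, dlogistic.
  replace (exp x / ((1 + exp x) * (1 + exp x)))
    with ((exp x * (1 + exp x) - exp x * exp x) / (1 + exp x)²)
    by (unfold Rsqr; field; lra).
  exact H.
Qed.

Lemma logistic_bounds x : 0 < logistic x < 1.
Proof.
  unfold logistic. assert (Hp := exp_pos x). split.
  - apply Rdiv_lt_0_compat; lra.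
  - apply Rmult_lt_reg_r with (1 + exp x); [lra|].
    unfold Rdiv. rewrite Rmult_assoc, Rinv_l by lra. lra.
Qed.

Lemma dlogisticE x : dlogistic x = logistic x * (1 - logistic x).
Proof. unfold dlogistic, logistic. assert (Hp := exp_pos x). field. lra. Qed.

Lemma dlogistic_le x : dlogistic x <= 1 / 4.
Proof. rewrite dlogisticE. pose proof (Rle_0_sqr (logistic x - 1 / 2)). unfold Rsqr in *. nra. Qed.

Lemma dlogistic_ge x : exp (- Rabs x) / 4 <= dlogistic x.
Proof.
  unfold dlogistic. assert (Hp := exp_pos x). assert (Hq := exp_pos (- Rabs x)).
  set (e := exp x) in *.
  apply Rmult_le_reg_r with (4 * ((1 + e) * (1 + e))); [nra|].
  replace (e / ((1 + e) * (1 + e)) * (4 * ((1 + e) * (1 + e)))) with (4 * e) by (field; lra).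
  replace (exp (- Rabs x) / 4 * (4 * ((1 + e) * (1 + e))))
    with (exp (- Rabs x) * ((1 + e) * (1 + e))) by field.
  destruct (Rle_or_lt 0 x).
  - rewrite Rabs_pos_eq by lra.
    assert (exp (- x) * e = 1)
      by (unfold e; rewrite <- exp_plus, <- exp_0; f_equal; ring).
    assert (1 <= e) by (unfold e; pose proof (exp_ineq1_le x); lra).
    nra.
  - rewrite Rabs_left, Ropp_involutive by lra. fold e.
    assert (e <= 1) by (unfold e; rewrite <- exp_0; left; apply exp_increasing; lra).
    nra.
Qed.

Lemma logistic_lipschitz a b : Rabs (logistic a - logistic b) <= Rabs (a - b) / 4.
Proof.
  assert (G : forall a b, a < b -> Rabs (logistic b - logistic a) <= Rabs (b - a) / 4).
  { intros x y Hxy.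
    destruct (MVT_cor2 logistic dlogistic x y Hxy) as [c [Hc _]];
      [intros; apply derivable_pt_lim_logistic|].
    rewrite Hc, Rabs_mult.
    assert (0 <= dlogistic c) by (rewrite dlogisticE; pose proof (logistic_bounds c); nra).
    rewrite (Rabs_pos_eq (dlogistic c)) by lra.
    pose proof (dlogistic_le c). pose proof (Rabs_pos (y - x)). nra. }
  destruct (Rtotal_order a b) as [H | [<- | H]].
  - rewrite Rabs_minus_sym, (Rabs_minus_sym a). now apply G.
  - unfold Rminus. rewrite !Rplus_opp_r, Rabs_R0. lra.
  - now apply G.
Qed.

Lemma dlogistic_lipschitz a b : Rabs (dlogistic a - dlogistic b) <= Rabs (a - b) / 4.
Proof.
  rewrite !dlogisticE. pose proof (logistic_bounds a). pose proof (logistic_bounds b).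
  replace (logistic a * (1 - logistic a) - logistic b * (1 - logistic b))
    with ((logistic a - logistic b) * (1 - logistic a - logistic b)) by ring.
  rewrite Rabs_mult.
  assert (Rabs (1 - logistic a - logistic b) <= 1) by (apply Rabs_le; lra).
  pose proof (logistic_lipschitz a b). pose proof (Rabs_pos (logistic a - logistic b)). nra.
Qed.

(* The partial derivative of [alpha_a + beta_b] in the coordinate [p] of [theta]. *)
Definition pair_grad (n a b p : nat) : R :=
  ind (Nat.eqb a p) + (if Nat.ltb b (n - 1) then ind (Nat.eqb (n + b) p) else 0).

(* Row [r] of the Jacobian of [F]: [A k] and [B k] are the out- and in-index
   of the [k]-th summand ([A = const i] for out-degrees, [B = const j] for
   in-degrees). *)
Definition jac_row (n : nat) (theta : nat -> R) (r : nat) (A B : nat -> nat) (p : nat) : R :=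
  - sumR n (fun k => if Nat.eqb k r then 0
      else dlogistic (theta (A k) + beta n theta (B k)) * pair_grad n (A k) (B k) p).

Definition jac (n : nat) (theta : nat -> R) (i p : nat) : R :=
  if Nat.ltb i n then jac_row n theta i (fun _ => i) (fun k => k) p
  else jac_row n theta (i - n) (fun k => k) (fun _ => (i - n)%nat) p.

Lemma upd_same theta p : upd theta p (theta p) = theta.
Proof.
  apply functional_extensionality. intros j. unfold upd.
  destruct (Nat.eqb_spec j p); now subst.
Qed.

Lemma derivable_pt_lim_select (c : bool) K t0 :
  derivable_pt_lim (fun t => if c then t else K) t0 (ind c).
Proof. destruct c; [apply derivable_pt_lim_id | apply derivable_pt_lim_const]. Qed.

Lemma derivable_pt_lim_logistic_pair n theta p a b :
  derivable_pt_lim (fun t => logistic (alpha (upd theta p t) a + beta n (upd theta p t) b))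
    (theta p) (dlogistic (theta a + beta n theta b) * pair_grad n a b p).
Proof.
  set (g := fun t => alpha (upd theta p t) a + beta n (upd theta p t) b).
  change (derivable_pt_lim (comp logistic g) (theta p)
            (dlogistic (theta a + beta n theta b) * pair_grad n a b p)).
  apply derivable_pt_lim_comp.
  - unfold g, pair_grad, alpha, beta, upd.
    apply (derivable_pt_lim_plus (fun t => if Nat.eqb a p then t else theta a)
      (fun t => if Nat.ltb b (n - 1) then if Nat.eqb (n + b) p then t else theta (n + b)%nat else 0)).
    + apply derivable_pt_lim_select.
    + destruct (Nat.ltb b (n - 1));
        [apply derivable_pt_lim_select | apply (derivable_pt_lim_const 0)].
  - replace (g (theta p)) with (theta a + beta n theta b)
      by (unfold g; now rewrite upd_same).
    apply derivable_pt_lim_logistic.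
Qed.

Lemma derivable_pt_lim_sumR m (h : nat -> R -> R) h' t0 :
  (forall k, derivable_pt_lim (h k) t0 (h' k)) ->
  derivable_pt_lim (fun t => sumR m (fun k => h k t)) t0 (sumR m h').
Proof.
  intros H. induction m.
  - replace (fun t => sumR 0 (fun k => h k t)) with (fct_cte 0)
      by (apply functional_extensionality; reflexivity).
    apply derivable_pt_lim_const.
  - replace (fun t => sumR (S m) (fun k => h k t))
      with (plus_fct (fun t => sumR m (fun k => h k t)) (h m))
      by (apply functional_extensionality; intros t; unfold plus_fct; now rewrite sumR_S).
    rewrite sumR_S. now apply derivable_pt_lim_plus.
Qed.

Lemma derivable_pt_lim_Fmap n a theta i p :
  derivable_pt_lim (fun t => Fmap n a (upd theta p t) i) (theta p) (jac n theta i p).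
Proof.
  unfold Fmap, jac, jac_row, Eoutdeg, Eindeg. destruct (Nat.ltb i n).
  - set (S := sumR n _). replace (- S) with (0 - S) by ring.
    apply (derivable_pt_lim_minus (fct_cte (outdeg n a i))); [apply derivable_pt_lim_const|].
    apply (derivable_pt_lim_sumR n (fun k t => if Nat.eqb k i then 0
             else logistic (alpha (upd theta p t) i + beta n (upd theta p t) k))).
    intros k. destruct (Nat.eqb k i);
      [apply (derivable_pt_lim_const 0) | apply derivable_pt_lim_logistic_pair].
  - set (S := sumR n _). replace (- S) with (0 - S) by ring.
    apply (derivable_pt_lim_minus (fct_cte (indeg n a (i - n)))); [apply derivable_pt_lim_const|].
    apply (derivable_pt_lim_sumR n (fun k t => if Nat.eqb k (i - n) then 0
             else logistic (alpha (upd theta p t) k + beta n (upd theta p t) (i - n)))).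
    intros k. destruct (Nat.eqb k (i - n));
      [apply (derivable_pt_lim_const 0) | apply derivable_pt_lim_logistic_pair].
Qed.

Lemma is_jacobian_Fmap_eq m n a theta J i p :
  is_jacobian m (Fmap n a) theta J -> (i < m)%nat -> (p < m)%nat -> J i p = jac n theta i p.
Proof. intros H Hi Hp. eapply uniqueness_limite; [apply H; auto | apply derivable_pt_lim_Fmap]. Qed.

Lemma matvec_jacobian m n a theta J v i :
  is_jacobian m (Fmap n a) theta J -> (i < m)%nat ->
  matvec m J v i = sumR m (fun p => jac n theta i p * v p).
Proof.
  intros H Hi. apply sumR_ext. intros p Hp.
  now rewrite (is_jacobian_Fmap_eq m n a theta J i p).
Qed.

Lemma sumR_pair_grad m n a b v : (a < m)%nat -> ((b < n - 1)%nat -> (n + b < m)%nat) ->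
  sumR m (fun p => pair_grad n a b p * v p) = v a + beta n v b.
Proof.
  intros Ha Hb. unfold pair_grad, beta.
  rewrite (sumR_ext m _ (fun p => ind (Nat.eqb a p) * v p +
     (if Nat.ltb b (n - 1) then ind (Nat.eqb (n + b) p) else 0) * v p)) by (intros; ring).
  rewrite sumR_plus, sumR_delta by auto. f_equal.
  destruct (Nat.ltb_spec b (n - 1)).
  - now apply sumR_delta, Hb.
  - apply sumR_eq_0. intros; ring.
Qed.

Lemma sumR_jac_row m n theta r A B v :
  (forall k, (k < n)%nat -> (A k < m)%nat /\ ((B k < n - 1)%nat -> (n + B k < m)%nat)) ->
  sumR m (fun p => jac_row n theta r A B p * v p) =
  - sumR n (fun k => if Nat.eqb k r then 0 else
      dlogistic (theta (A k) + beta n theta (B k)) * (v (A k) + beta n v (B k))).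
Proof.
  intros H. unfold jac_row.
  transitivity (sumR m (fun p => - sumR n (fun k => (if Nat.eqb k r then 0 else
       dlogistic (theta (A k) + beta n theta (B k)) * pair_grad n (A k) (B k) p) * v p))).
  { apply sumR_ext; intros. rewrite sumR_scal_r. ring. }
  rewrite sumR_opp, sumR_comm. f_equal. apply sumR_ext. intros k Hk.
  destruct (Nat.eqb k r); [apply sumR_eq_0; intros; ring|].
  rewrite (sumR_ext m _ (fun p => dlogistic (theta (A k) + beta n theta (B k))
                                  * (pair_grad n (A k) (B k) p * v p))) by (intros; ring).
  rewrite sumR_scal_l. destruct (H k Hk). now rewrite sumR_pair_grad.
Qed.

(** * Part (a): Lipschitz continuity of the Jacobian *)

Lemma beta_abs_le n v b : Rabs (beta n v b) <= norm_inf (2 * n - 1) v.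
Proof.
  unfold beta. destruct (Nat.ltb_spec b (n - 1)).
  - apply norm_inf_ge; lia.
  - rewrite Rabs_R0. apply norm_inf_ge0.
Qed.

Lemma dlogistic_pair_diff_le n x y a b : (a < 2 * n - 1)%nat ->
  Rabs (dlogistic (x a + beta n x b) - dlogistic (y a + beta n y b))
  <= norm_inf (2 * n - 1) (vsub x y) / 2.
Proof.
  intros Ha. eapply Rle_trans; [apply dlogistic_lipschitz|].
  replace (x a + beta n x b - (y a + beta n y b)) with (vsub x y a + beta n (vsub x y) b)
    by (unfold vsub, beta; destruct (Nat.ltb b (n - 1)); ring).
  pose proof (Rabs_triang (vsub x y a) (beta n (vsub x y) b)).
  pose proof (norm_inf_ge _ (vsub x y) a Ha). pose proof (beta_abs_le n (vsub x y) b). lra.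
Qed.

Lemma jac_row_matvec_lipschitz n r A B x y v : (r < n)%nat ->
  (forall k, (k < n)%nat -> (A k < n)%nat /\ ((B k < n - 1)%nat -> (n + B k < 2 * n - 1)%nat)) ->
  Rabs (sumR (2 * n - 1) (fun p => jac_row n x r A B p * v p)
        - sumR (2 * n - 1) (fun p => jac_row n y r A B p * v p))
  <= INR (n - 1) * norm_inf (2 * n - 1) (vsub x y) * norm_inf (2 * n - 1) v.
Proof.
  intros Hr H.
  rewrite !(sumR_jac_row (2 * n - 1)) by (intros k Hk; destruct (H k Hk); split; [lia | auto]).
  match goal with |- Rabs (- ?S1 - - ?S2) <= _ => replace (- S1 - - S2) with (- (S1 - S2)) by ring end.
  rewrite Rabs_Ropp, sumR_skip_minus, Rmult_assoc. apply sumR_skip_abs_le; auto.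
  intros k Hk _. destruct (H k Hk) as [HA _].
  rewrite <- Rmult_minus_distr_r, Rabs_mult.
  pose proof (dlogistic_pair_diff_le n x y (A k) (B k) ltac:(lia)).
  pose proof (Rabs_triang (v (A k)) (beta n v (B k))).
  pose proof (norm_inf_ge (2 * n - 1) v (A k) ltac:(lia)). pose proof (beta_abs_le n v (B k)).
  pose proof (Rabs_pos (v (A k) + beta n v (B k))).
  pose proof (norm_inf_ge0 (2 * n - 1) (vsub x y)).
  apply Rle_trans with (norm_inf (2 * n - 1) (vsub x y) / 2 * (2 * norm_inf (2 * n - 1) v));
    [apply Rmult_le_compat; auto; [apply Rabs_pos | lra] | lra].
Qed.

Lemma jac_row_lipschitz n r A B x y p : (r < n)%nat ->
  (forall k, (k < n)%nat -> (A k < n)%nat) ->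
  Rabs (jac_row n x r A B p - jac_row n y r A B p)
  <= INR (n - 1) / 2 * norm_inf (2 * n - 1) (vsub x y).
Proof.
  intros Hr H. unfold jac_row.
  match goal with |- Rabs (- ?S1 - - ?S2) <= _ => replace (- S1 - - S2) with (- (S1 - S2)) by ring end.
  rewrite Rabs_Ropp, sumR_skip_minus.
  replace (INR (n - 1) / 2 * norm_inf (2 * n - 1) (vsub x y))
    with (INR (n - 1) * (norm_inf (2 * n - 1) (vsub x y) / 2)) by field.
  apply sumR_skip_abs_le; auto.
  intros k Hk _. specialize (H k Hk).
  rewrite <- Rmult_minus_distr_r, Rabs_mult.
  pose proof (dlogistic_pair_diff_le n x y (A k) (B k) ltac:(lia)).
  assert (0 <= pair_grad n (A k) (B k) p <= 1).
  { unfold pair_grad, ind.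
    destruct (Nat.eqb_spec (A k) p), (Nat.ltb (B k) (n - 1));
      try destruct (Nat.eqb_spec (n + B k) p); try lia; lra. }
  rewrite (Rabs_pos_eq (pair_grad _ _ _ _)) by lra.
  pose proof (Rabs_pos (dlogistic (x (A k) + beta n x (B k)) - dlogistic (y (A k) + beta n y (B k)))).
  nra.
Qed.

Lemma jacobian_matvec_lipschitz n a x y v Jx Jy : (2 <= n)%nat ->
  is_jacobian (2 * n - 1) (Fmap n a) x Jx -> is_jacobian (2 * n - 1) (Fmap n a) y Jy ->
  norm_inf (2 * n - 1) (vsub (matvec (2 * n - 1) Jx v) (matvec (2 * n - 1) Jy v))
  <= INR (n - 1) * norm_inf (2 * n - 1) (vsub x y) * norm_inf (2 * n - 1) v.
Proof.
  intros Hn HJx HJy.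
  pose proof (norm_inf_ge0 (2 * n - 1) (vsub x y)). pose proof (norm_inf_ge0 (2 * n - 1) v).
  pose proof (pos_INR (n - 1)).
  apply norm_inf_le; [apply Rmult_le_pos; [apply Rmult_le_pos|]; lra|].
  intros i Hi. unfold vsub at 1.
  rewrite (matvec_jacobian _ n a x Jx), (matvec_jacobian _ n a y Jy) by auto.
  unfold jac. destruct (Nat.ltb_spec i n);
    apply jac_row_matvec_lipschitz; try lia; intros k Hk; split; lia.
Qed.

Lemma jacobian_row_lipschitz n a x y Jx Jy i : (2 <= n)%nat ->
  is_jacobian (2 * n - 1) (Fmap n a) x Jx -> is_jacobian (2 * n - 1) (Fmap n a) y Jy ->
  (i < 2 * n - 1)%nat ->
  norm_inf (2 * n - 1) (vsub (Jx i) (Jy i)) <= INR (n - 1) / 2 * norm_inf (2 * n - 1) (vsub x y).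
Proof.
  intros Hn HJx HJy Hi.
  pose proof (norm_inf_ge0 (2 * n - 1) (vsub x y)). pose proof (pos_INR (n - 1)).
  apply norm_inf_le; [apply Rmult_le_pos; lra|].
  intros p Hp. unfold vsub at 1.
  rewrite (is_jacobian_Fmap_eq (2 * n - 1) n a x Jx i p),
    (is_jacobian_Fmap_eq (2 * n - 1) n a y Jy i p) by auto.
  unfold jac. destruct (Nat.ltb_spec i n); apply jac_row_lipschitz; lia.
Qed.

(** * A maximum principle for bipartite weighted Laplacians *)

Definition lap_out (n : nat) (c : nat -> nat -> R) (u y : nat -> R) (i : nat) : R :=
  sumR n (fun k => if Nat.eqb k i then 0 else c i k * (u i - y k)).

Definition lap_in (n : nat) (c : nat -> nat -> R) (u y : nat -> R) (j : nat) : R :=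
  sumR n (fun k => if Nat.eqb k j then 0 else c k j * (y j - u k)).

Definition transpose (c : nat -> nat -> R) (i k : nat) : R := c k i.

Definition weights_in (n : nat) (m M : R) (c : nat -> nat -> R) : Prop :=
  forall i k, (i < n)%nat -> (k < n)%nat -> m <= c i k <= M.

Lemma weights_in_transpose n m M c : weights_in n m M c -> weights_in n m M (transpose c).
Proof. intros H i k Hi Hk. now apply H. Qed.

Lemma Rabs_le_inv x b : Rabs x <= b -> - b <= x <= b.
Proof. unfold Rabs. destruct (Rcase_abs x); lra. Qed.

Lemma sumR_lap_out_lap_in n c u y :
  sumR n (lap_out n c u y) + sumR n (lap_in n c u y) = 0.
Proof.
  unfold lap_out, lap_in.
  rewrite (sumR_comm n n (fun j k => if Nat.eqb k j then 0 else c k j * (y j - u k))),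
    <- sumR_plus.
  apply sumR_eq_0. intros i Hi. rewrite <- sumR_plus. apply sumR_eq_0.
  intros k Hk. rewrite (Nat.eqb_sym i k). destruct (Nat.eqb k i); ring.
Qed.

Lemma sumR_spread n U L (f : nat -> R) :
  sumR n (fun k => U - f k) + sumR n (fun k => f k - L) = INR n * (U - L).
Proof. rewrite <- sumR_plus, <- sumR_const. apply sumR_ext. intros; ring. Qed.

Section MaxPrinciple.

Variables (n : nat) (m M B : R).
Hypothesis m_gt0 : 0 < m.

Lemma lap_out_at_max c u y p : weights_in n m M c -> (p < n)%nat ->
  (forall k, (k < n)%nat -> y k <= u p) -> lap_out n c u y p <= B ->
  m * sumR n (fun k => if Nat.eqb k p then 0 else u p - y k) <= B.
Proof.
  intros Hc Hp Hy HS. rewrite <- sumR_scal_l. eapply Rle_trans; [|exact HS].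
  apply sumR_le. intros k Hk. destruct (Nat.eqb k p); [lra|].
  specialize (Hy k Hk). apply Rmult_le_compat_r; [lra | apply Hc; auto].
Qed.

Lemma lap_out_at_min c u y q : weights_in n m M c -> (q < n)%nat ->
  (forall k, (k < n)%nat -> u q <= y k) -> - B <= lap_out n c u y q ->
  m * sumR n (fun k => if Nat.eqb k q then 0 else y k - u q) <= B.
Proof.
  intros Hc Hq Hy HS. rewrite <- sumR_scal_l. apply Rle_trans with (- lap_out n c u y q); [|lra].
  unfold lap_out. rewrite <- sumR_opp. apply sumR_le. intros k Hk.
  destruct (Nat.eqb k q); [lra|]. specialize (Hy k Hk).
  assert (m * (y k - u q) <= c q k * (y k - u q))
    by (apply Rmult_le_compat_r; [lra | apply Hc; auto]).
  lra.
Qed.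

Lemma lap_in_spread c u y U k : weights_in n m M c -> (k < n)%nat ->
  (forall l, (l < n)%nat -> u l <= U) -> y k <= U -> lap_in n c u y k <= B ->
  m * sumR n (fun l => if Nat.eqb l k then 0 else U - u l) <= (INR n - 1) * M * (U - y k) + B.
Proof.
  intros Hc Hk Hu Hyk HB. rewrite <- sumR_scal_l.
  apply Rle_trans with
    (sumR n (fun l => if Nat.eqb l k then 0 else c l k * (U - y k) + c l k * (y k - u l))).
  { apply sumR_le. intros l Hl. destruct (Nat.eqb l k); [lra|].
    specialize (Hu l Hl). destruct (Hc l k Hl Hk).
    assert (m * (U - u l) <= c l k * (U - u l)) by (apply Rmult_le_compat_r; lra). lra. }
  rewrite sumR_skip_plus. fold (lap_in n c u y k).
  enough (sumR n (fun l => if Nat.eqb l k then 0 else c l k * (U - y k)) <= (INR n - 1) * M * (U - y k))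
    by lra.
  apply Rle_trans with (sumR n (fun l => if Nat.eqb l k then 0 else M * (U - y k))).
  - apply sumR_le. intros l Hl. destruct (Nat.eqb l k); [lra|].
    apply Rmult_le_compat_r; [lra | apply Hc; auto].
  - rewrite sumR_skip, sumR_const by auto. lra.
Qed.

Section Extremes.

Variables (c : nat -> nat -> R) (u y : nat -> R) (U L : R).
Hypothesis c_weights : weights_in n m M c.
Hypothesis entries_between : forall k, (k < n)%nat -> L <= u k <= U /\ L <= y k <= U.

Lemma spread_bound_same_side p q : (p < n)%nat -> (q < n)%nat -> u p = U -> u q = L ->
  lap_out n c u y p <= B -> - B <= lap_out n c u y q ->
  m * (INR n - 2) * (U - L) <= 2 * B.
Proof.
  intros Hp Hq HU HL HSp HSq.
  assert (Hmax := lap_out_at_max c u y p c_weights Hp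
                    ltac:(intros k Hk; destruct (entries_between k Hk); lra) HSp).
  assert (Hmin := lap_out_at_min c u y q c_weights Hq
                    ltac:(intros k Hk; destruct (entries_between k Hk); lra) HSq).
  rewrite HU, sumR_skip in Hmax by auto. rewrite HL, sumR_skip in Hmin by auto.
  pose proof (sumR_spread n U L y).
  destruct (entries_between p Hp) as [_ Hyp], (entries_between q Hq) as [_ Hyq].
  nra.
Qed.

Lemma spread_bound_opposite_sides p q : (2 <= n)%nat -> 0 <= B ->
  (p < n)%nat -> (q < n)%nat -> u p = U -> y q = L ->
  lap_out n c u y p <= B -> - B <= lap_in n c u y q ->
  (forall k, (k < n)%nat -> lap_in n c u y k <= B) ->
  m * (INR n - 2) * (U - L) <= 2 * B + M * B / m.
Proof.
  intros Hn HB Hp Hq HU HL HSp HSq HSk.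
  assert (Hn1 : 1 <= INR n - 1) by (apply le_INR in Hn; simpl in Hn; lra).
  assert (Hmax := lap_out_at_max c u y p c_weights Hp
                    ltac:(intros k Hk; destruct (entries_between k Hk); lra) HSp).
  assert (Hmin := lap_out_at_min (transpose c) y u q (weights_in_transpose _ _ _ _ c_weights) Hq
                    ltac:(intros k Hk; destruct (entries_between k Hk); lra) HSq).
  rewrite HU in Hmax. rewrite HL, sumR_skip in Hmin by auto.
  pose proof (sumR_spread n U L u).
  set (X := m * (INR n - 2) * (U - L)).
  (* Each in-degree equation bounds [X] by the spread [U - y k] of its node. *)
  assert (Hk : forall k, (k < n)%nat -> X - 2 * B <= (INR n - 1) * M * (U - y k)).
  { intros k Hk.
    pose proof (lap_in_spread c u y U k c_weights Hk
                  ltac:(intros l Hl; apply entries_between, Hl)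
                  ltac:(apply entries_between, Hk) (HSk k Hk)) as Hspread.
    rewrite sumR_skip in Hspread by auto.
    destruct (entries_between k Hk), (entries_between q Hq). unfold X. nra. }
  assert (Hsum : sumR n (fun k => if Nat.eqb k p then 0 else X - 2 * B)
                 <= sumR n (fun k => (INR n - 1) * M * (if Nat.eqb k p then 0 else U - y k))).
  { apply sumR_le. intros k Hk'. destruct (Nat.eqb k p); [lra | now apply Hk]. }
  rewrite sumR_skip, sumR_const, sumR_scal_l in Hsum by auto.
  assert (HM : 0 <= M) by (destruct (c_weights p p Hp Hp); lra).
  assert (X - 2 * B <= M * sumR n (fun k => if Nat.eqb k p then 0 else U - y k)).
  { apply Rmult_le_reg_l with (INR n - 1); lra. }
  assert (M * sumR n (fun k => if Nat.eqb k p then 0 else U - y k) <= M * B / m).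
  { unfold Rdiv. rewrite Rmult_assoc. apply Rmult_le_compat_l; [lra|].
    apply Rmult_le_reg_l with m; [lra|]. rewrite <- Rmult_assoc, (Rmult_comm m B), Rmult_assoc,
      Rinv_r by lra. lra. }
  lra.
Qed.

End Extremes.

Lemma exists_max_entry (u y : nat -> R) : (0 < n)%nat ->
  exists U, (forall k, (k < n)%nat -> u k <= U /\ y k <= U) /\
            exists p, (p < n)%nat /\ (u p = U \/ y p = U).
Proof.
  intros Hn. set (w := fun k => if Nat.ltb k n then u k else y (k - n)%nat).
  destruct (exists_argmax w (2 * n) ltac:(lia)) as [p [Hp Hw]].
  exists (w p). split.
  - intros k Hk. split.
    + specialize (Hw k ltac:(lia)). unfold w at 1 in Hw.
      destruct (Nat.ltb_spec k n); [exact Hw | lia].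
    + specialize (Hw (n + k)%nat ltac:(lia)). unfold w at 1 in Hw.
      destruct (Nat.ltb_spec (n + k) n); [lia|]. now replace (n + k - n)%nat with k in Hw by lia.
  - unfold w. destruct (Nat.ltb_spec p n).
    + exists p. auto.
    + exists (p - n)%nat. split; [lia | auto].
Qed.

Lemma exists_min_entry (u y : nat -> R) : (0 < n)%nat ->
  exists L, (forall k, (k < n)%nat -> L <= u k /\ L <= y k) /\
            exists q, (q < n)%nat /\ (u q = L \/ y q = L).
Proof.
  intros Hn. destruct (exists_max_entry (fun k => - u k) (fun k => - y k) Hn)
    as [U [HU [q [Hq Hext]]]].
  exists (- U). split.
  - intros k Hk. destruct (HU k Hk). lra.
  - exists q. split; [auto | lra].
Qed.

Lemma spread_bound_max_in_u c u y U L p : (3 <= n)%nat -> 0 <= B ->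
  weights_in n m M c ->
  (forall i, (i < n)%nat -> Rabs (lap_out n c u y i) <= B) ->
  (forall j, (j < n)%nat -> Rabs (lap_in n c u y j) <= B) ->
  (forall k, (k < n)%nat -> L <= u k <= U /\ L <= y k <= U) ->
  (p < n)%nat -> u p = U -> (exists q, (q < n)%nat /\ (u q = L \/ y q = L)) ->
  m * (INR n - 2) * (U - L) <= 2 * B + M * B / m.
Proof.
  intros Hn HB Hc Hout Hin Hent Hp HU [q [Hq [HL | HL]]].
  - assert (HM : 0 <= M) by (destruct (Hc p p Hp Hp); lra).
    assert (0 <= M * B / m) by (apply Rmult_le_pos; [nra | left; now apply Rinv_0_lt_compat]).
    enough (m * (INR n - 2) * (U - L) <= 2 * B) by lra.
    apply (spread_bound_same_side c u y U L Hc Hent p q Hp Hq HU HL);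
      [apply (Rabs_le_inv _ _ (Hout p Hp)) | apply (Rabs_le_inv _ _ (Hout q Hq))].
  - apply (spread_bound_opposite_sides c u y U L Hc Hent p q); auto; try lia.
    + apply (Rabs_le_inv _ _ (Hout p Hp)).
    + apply (Rabs_le_inv _ _ (Hin q Hq)).
    + intros k Hk. apply (Rabs_le_inv _ _ (Hin k Hk)).
Qed.

Theorem max_principle c u y : (3 <= n)%nat -> 0 <= B -> weights_in n m M c ->
  (forall i, (i < n)%nat -> Rabs (lap_out n c u y i) <= B) ->
  (forall j, (j < n)%nat -> Rabs (lap_in n c u y j) <= B) ->
  exists U L, (forall k, (k < n)%nat -> L <= u k <= U /\ L <= y k <= U) /\
              m * (INR n - 2) * (U - L) <= 2 * B + M * B / m.
Proof.
  intros Hn HB Hc Hout Hin.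
  destruct (exists_max_entry u y ltac:(lia)) as [U [HU [p [Hp HpU]]]].
  destruct (exists_min_entry u y ltac:(lia)) as [L [HL HqL]].
  assert (Hent : forall k, (k < n)%nat -> L <= u k <= U /\ L <= y k <= U)
    by (intros k Hk; destruct (HU k Hk), (HL k Hk); lra).
  exists U, L. split; [exact Hent|].
  destruct HpU as [HpU | HpU].
  - exact (spread_bound_max_in_u c u y U L p Hn HB Hc Hout Hin Hent Hp HpU HqL).
  (* If the maximum is attained by [y], exchange the roles of [u] and [y]. *)
  - apply (spread_bound_max_in_u (transpose c) y u U L p Hn HB
             (weights_in_transpose _ _ _ _ Hc) Hin Hout); auto.
    + intros k Hk. destruct (Hent k Hk). auto.
    + destruct HqL as [q [Hq HqL]]. exists q. tauto.
Qed.

End MaxPrinciple.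

(** * Part (b): an a priori bound for the Newton step *)

Section JacobianLaplacian.

Variables (n : nat) (a : nat -> nat -> bool) (theta : nat -> R) (J : nat -> nat -> R).
Hypothesis J_jacobian : is_jacobian (2 * n - 1) (Fmap n a) theta J.

Let weight (i k : nat) : R := dlogistic (theta i + beta n theta k).

(* With [y = - beta], [J v] becomes the bipartite Laplacian [(- lap_out, lap_in)] of [(v, y)]. *)
Let neg_beta (v : nat -> R) (k : nat) : R := - beta n v k.

Lemma lap_out_jacobian v i : (i < n)%nat ->
  lap_out n weight v (neg_beta v) i = - matvec (2 * n - 1) J v i.
Proof.
  intros Hi. rewrite (matvec_jacobian _ n a theta J) by (auto; lia).
  unfold jac. destruct (Nat.ltb_spec i n); [|lia].
  rewrite (sumR_jac_row (2 * n - 1)) by (intros; split; lia).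
  rewrite Ropp_involutive. apply sumR_ext. intros k Hk.
  unfold weight, neg_beta. destruct (Nat.eqb k i); ring.
Qed.

Lemma lap_in_jacobian v j : (j < n - 1)%nat ->
  lap_in n weight v (neg_beta v) j = matvec (2 * n - 1) J v (n + j).
Proof.
  intros Hj. rewrite (matvec_jacobian _ n a theta J) by (auto; lia).
  unfold jac. destruct (Nat.ltb_spec (n + j) n); [lia|].
  replace (n + j - n)%nat with j by lia.
  rewrite (sumR_jac_row (2 * n - 1)) by (intros; split; lia).
  unfold lap_in. rewrite <- sumR_opp. apply sumR_ext. intros k Hk.
  unfold weight, neg_beta. destruct (Nat.eqb k j); ring.
Qed.

Lemma lap_in_last_jacobian v : (1 <= n)%nat ->
  lap_in n weight v (neg_beta v) (n - 1) =
  sumR n (fun i => matvec (2 * n - 1) J v i) - sumR (n - 1) (fun j => matvec (2 * n - 1) J v (n + j)).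
Proof.
  intros Hn. pose proof (sumR_lap_out_lap_in n weight v (neg_beta v)) as Hsum.
  rewrite (sumR_pred n (lap_in _ _ _ _)) in Hsum by auto.
  rewrite (sumR_ext n _ (fun i => - lap_out n weight v (neg_beta v) i))
    by (intros i Hi; rewrite lap_out_jacobian by auto; ring).
  rewrite (sumR_ext (n - 1) _ (lap_in n weight v (neg_beta v)))
    by (intros j Hj; rewrite lap_in_jacobian by auto; reflexivity).
  rewrite sumR_opp. lra.
Qed.

Lemma jacobian_weights :
  weights_in n (exp (- (2 * norm_inf (2 * n - 1) theta)) / 4) (1 / 4) weight.
Proof.
  intros i k Hi Hk. split; [|apply dlogistic_le].
  eapply Rle_trans; [|apply dlogistic_ge]. unfold Rdiv. apply Rmult_le_compat_r; [lra|].
  pose proof (norm_inf_ge (2 * n - 1) theta i ltac:(lia)). pose proof (beta_abs_le n theta k).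
  pose proof (Rabs_triang (theta i) (beta n theta k)).
  destruct (Req_dec (- Rabs (theta i + beta n theta k)) (- (2 * norm_inf (2 * n - 1) theta)))
    as [-> | Hne]; [lra|].
  left. apply exp_increasing. lra.
Qed.

Lemma jacobian_spread_bound v B : (3 <= n)%nat -> 0 <= B ->
  (forall i, (i < 2 * n - 1)%nat -> Rabs (matvec (2 * n - 1) J v i) <= B) ->
  Rabs (sumR n (fun i => matvec (2 * n - 1) J v i)
        - sumR (n - 1) (fun j => matvec (2 * n - 1) J v (n + j))) <= B ->
  forall i, (i < 2 * n - 1)%nat ->
    exp (- (2 * norm_inf (2 * n - 1) theta)) / 4 * (INR n - 2) * Rabs (v i)
    <= 2 * B + 1 / 4 * B / (exp (- (2 * norm_inf (2 * n - 1) theta)) / 4).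
Proof.
  intros Hn HB Hrows Hlast i Hi.
  set (m := exp (- (2 * norm_inf (2 * n - 1) theta)) / 4).
  assert (Hm : 0 < m) by (unfold m; pose proof (exp_pos (- (2 * norm_inf (2 * n - 1) theta))); lra).
  assert (Hout : forall i, (i < n)%nat -> Rabs (lap_out n weight v (neg_beta v) i) <= B).
  { intros i' Hi'. rewrite lap_out_jacobian, Rabs_Ropp by auto. apply Hrows; lia. }
  assert (Hin : forall j, (j < n)%nat -> Rabs (lap_in n weight v (neg_beta v) j) <= B).
  { intros j Hj. destruct (Nat.eq_dec j (n - 1)) as [-> | Hj'].
    - rewrite lap_in_last_jacobian by lia. exact Hlast.
    - rewrite lap_in_jacobian by lia. apply Hrows; lia. }
  destruct (max_principle n m (1 / 4) B Hm weight v (neg_beta v) Hn HB jacobian_weights Hout Hin)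
    as [U [L [Hent Hspread]]].
  assert (HnR : 3 <= INR n) by (apply le_INR in Hn; simpl in Hn; lra).
  eapply Rle_trans; [|exact Hspread]. apply Rmult_le_compat_l; [apply Rmult_le_pos; lra|].
  (* [neg_beta v (n - 1) = 0] places [0] between [L] and [U]. *)
  assert (Hzero : L <= 0 <= U).
  { destruct (Hent (n - 1)%nat ltac:(lia)) as [_ Hy].
    unfold neg_beta, beta in Hy. destruct (Nat.ltb_spec (n - 1) (n - 1)); [lia|]. lra. }
  destruct (Nat.ltb_spec i n).
  - destruct (Hent i H). apply Rabs_le. lra.
  - destruct (Hent (i - n)%nat ltac:(lia)) as [_ Hy].
    unfold neg_beta, beta in Hy. destruct (Nat.ltb_spec (i - n) (n - 1)); [|lia].
    replace (n + (i - n))%nat with i in Hy by lia. apply Rabs_le. lra.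
Qed.

Lemma jacobian_invertible : (3 <= n)%nat -> invertible (2 * n - 1) J.
Proof.
  intros Hn v Hv i Hi.
  assert (Hsums : sumR n (fun i => matvec (2 * n - 1) J v i)
                  - sumR (n - 1) (fun j => matvec (2 * n - 1) J v (n + j)) = 0).
  { rewrite (sumR_eq_0 n), (sumR_eq_0 (n - 1)); [ring | |]; intros; apply Hv; lia. }
  pose proof (jacobian_spread_bound v 0 Hn (Rle_refl 0)
    ltac:(intros j Hj; rewrite Hv, Rabs_R0 by auto; lra)
    ltac:(rewrite Hsums, Rabs_R0; lra) i Hi) as H.
  set (m := exp (- (2 * norm_inf (2 * n - 1) theta)) / 4) in H.
  assert (0 < m) by (unfold m; pose proof (exp_pos (- (2 * norm_inf (2 * n - 1) theta))); lra).
  replace (2 * 0 + 1 / 4 * 0 / m) with 0 in H by (field; lra).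
  assert (HnR : 3 <= INR n) by (apply le_INR in Hn; simpl in Hn; lra).
  assert (Habs : Rabs (v i) <= 0).
  { apply Rmult_le_reg_l with (m * (INR n - 2)); [apply Rmult_lt_0_compat; lra|].
    rewrite Rmult_0_r. exact H. }
  destruct (Req_dec (v i) 0) as [|Hne]; [auto|].
  pose proof (Rabs_pos_lt (v i) Hne). lra.
Qed.

End JacobianLaplacian.

Lemma degree_balance n a theta : (1 <= n)%nat ->
  sumR n (fun i => Fmap n a theta i) - sumR (n - 1) (fun j => Fmap n a theta (n + j))
  = indeg n a (n - 1) - Eindeg n theta (n - 1).
Proof.
  intros Hn.
  rewrite (sumR_ext n _ (fun i => outdeg n a i - Eoutdeg n theta i))
    by (intros i Hi; unfold Fmap; destruct (Nat.ltb_spec i n); [reflexivity | lia]).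
  rewrite (sumR_ext (n - 1) _ (fun j => indeg n a j - Eindeg n theta j))
    by (intros j Hj; unfold Fmap; destruct (Nat.ltb_spec (n + j) n); [lia|];
        now replace (n + j - n)%nat with j by lia).
  assert (Hdeg : sumR n (outdeg n a) = sumR n (indeg n a)).
  { unfold outdeg, indeg. rewrite sumR_comm. apply sumR_ext. intros j Hj.
    apply sumR_ext. intros i Hi. now rewrite Nat.eqb_sym. }
  assert (Hexp : sumR n (Eoutdeg n theta) = sumR n (Eindeg n theta)).
  { unfold Eoutdeg, Eindeg. rewrite sumR_comm. apply sumR_ext. intros j Hj.
    apply sumR_ext. intros i Hi. now rewrite Nat.eqb_sym. }
  rewrite (sumR_minus n (outdeg n a)), Hdeg, Hexp, sumR_minus,
    (sumR_pred n (indeg n a)), (sumR_pred n (Eindeg n theta)) by auto.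
  ring.
Qed.

(* Here [X] is a coordinate of the Newton step, [T = |theta|_oo] and [N = n];
   [e^{2T} >= 1] absorbs all lower-order terms. *)
Lemma rate_bound (N T X : R) : 3 <= N -> 0 <= T ->
  exp (- (2 * T)) / 4 * (N - 2) * X
    <= 2 * sqrt ((N - 1) * ln (N - 1))
       + 1 / 4 * sqrt ((N - 1) * ln (N - 1)) / (exp (- (2 * T)) / 4) ->
  X <= sqrt (ln N) / sqrt N * (12 * exp (6 * T) + 24 * exp (2 * T)).
Proof.
  intros HN HT H.
  set (E := exp (2 * T)) in *. set (B := sqrt ((N - 1) * ln (N - 1))) in *.
  assert (HE : 1 <= E) by (unfold E; pose proof (exp_ineq1_le (2 * T)); lra).
  rewrite exp_Ropp in H. fold E in H.
  replace (exp (6 * T)) with (E * E * E) by (unfold E; rewrite <- !exp_plus; f_equal; ring).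
  replace (1 / 4 * B / (/ E / 4)) with (B * E) in H by (field; lra).
  assert (HB0 : 0 <= B) by apply sqrt_pos.
  assert (H1 : (N - 2) * X <= 4 * E * (B * (2 + E))).
  { apply Rmult_le_reg_l with (/ E / 4).
    - apply Rmult_lt_0_compat; [apply Rinv_0_lt_compat|]; lra.
    - replace (/ E / 4 * (4 * E * (B * (2 + E)))) with (2 * B + B * E) by (field; lra). lra. }
  set (sN := sqrt N). set (sl := sqrt (ln N)).
  assert (HsN : 0 < sN) by (apply sqrt_lt_R0; lra).
  assert (HsN2 : sN * sN = N) by (apply sqrt_sqrt; lra).
  assert (Hl1 : 0 < ln (N - 1)) by (rewrite <- ln_1; apply ln_increasing; lra).
  assert (Hl2 : ln (N - 1) < ln N) by (apply ln_increasing; lra).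
  assert (Hsl : 0 <= sl) by apply sqrt_pos.
  assert (HBle : B <= sN * sl).
  { unfold B, sN, sl. rewrite <- sqrt_mult by lra. apply sqrt_le_1_alt. nra. }
  assert (H2 : (N - 2) * X * sN <= 4 * E * (2 + E) * N * sl).
  { apply Rle_trans with (4 * E * (2 + E) * (B * sN)).
    - replace (4 * E * (2 + E) * (B * sN)) with (4 * E * (B * (2 + E)) * sN) by ring.
      apply Rmult_le_compat_r; lra.
    - rewrite <- HsN2.
      replace (4 * E * (2 + E) * (sN * sN) * sl) with (4 * E * (2 + E) * (sN * sl * sN)) by ring.
      apply Rmult_le_compat_l; [nra|]. apply Rmult_le_compat_r; lra. }
  assert (H3 : 4 * E * (2 + E) * N <= (N - 2) * (12 * (E * E * E) + 24 * E))
    by (assert (E * E <= E * E * E) by nra; nra).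
  apply Rmult_le_reg_l with ((N - 2) * sN); [nra|].
  replace ((N - 2) * sN * (sl / sN * (12 * (E * E * E) + 24 * E)))
    with ((N - 2) * (12 * (E * E * E) + 24 * E) * sl) by (field; lra).
  apply Rmult_le_compat_r with (r := sl) in H3; [|exact Hsl]. lra.
Qed.

Lemma newton_step_bound n a theta J z : (3 <= n)%nat ->
  is_jacobian (2 * n - 1) (Fmap n a) theta J ->
  (forall i, (i < n)%nat ->
     Rabs (outdeg n a i - Eoutdeg n theta i) <= sqrt (INR (n - 1) * ln (INR (n - 1)))) ->
  (forall j, (j < n)%nat ->
     Rabs (indeg n a j - Eindeg n theta j) <= sqrt (INR (n - 1) * ln (INR (n - 1)))) ->
  (forall i, (i < 2 * n - 1)%nat -> matvec (2 * n - 1) J z i = Fmap n a theta i) ->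
  norm_inf (2 * n - 1) z
  <= sqrt (ln (INR n)) / sqrt (INR n)
     * (12 * exp (6 * norm_inf (2 * n - 1) theta) + 24 * exp (2 * norm_inf (2 * n - 1) theta)).
Proof.
  intros Hn HJ Hout Hin Hz.
  set (B := sqrt (INR (n - 1) * ln (INR (n - 1)))).
  assert (HnR : 3 <= INR n) by (apply le_INR in Hn; simpl in Hn; lra).
  assert (Hrows : forall i, (i < 2 * n - 1)%nat -> Rabs (matvec (2 * n - 1) J z i) <= B).
  { intros i Hi. rewrite Hz by auto. unfold Fmap. destruct (Nat.ltb_spec i n).
    - now apply Hout.
    - apply Hin. lia. }
  assert (Hlast : Rabs (sumR n (fun i => matvec (2 * n - 1) J z i)
                        - sumR (n - 1) (fun j => matvec (2 * n - 1) J z (n + j))) <= B).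
  { rewrite (sumR_ext n _ (Fmap n a theta)) by (intros; apply Hz; lia).
    rewrite (sumR_ext (n - 1) _ (fun j => Fmap n a theta (n + j))) by (intros; apply Hz; lia).
    rewrite degree_balance by lia. apply Hin. lia. }
  pose proof (norm_inf_ge0 (2 * n - 1) theta).
  apply norm_inf_le.
  - apply Rmult_le_pos.
    + unfold Rdiv. apply Rmult_le_pos; [apply sqrt_pos|].
      left. apply Rinv_0_lt_compat, sqrt_lt_R0. lra.
    + pose proof (exp_pos (6 * norm_inf (2 * n - 1) theta)).
      pose proof (exp_pos (2 * norm_inf (2 * n - 1) theta)). lra.
  - intros i Hi. apply rate_bound; [lra | auto|].
    pose proof (jacobian_spread_bound n a theta J HJ z B Hn (sqrt_pos _) Hrows Hlast i Hi) as Hi'.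
    unfold B in Hi'. rewrite minus_INR in Hi' by lia. exact Hi'.
Qed.

Theorem lemma2 :
  (* (a) *)
  (forall (n : nat) (a : nat -> nat -> bool) (x y v : nat -> R)
          (Jx Jy : nat -> nat -> R),
     (2 <= n)%nat ->
     is_jacobian (2 * n - 1) (Fmap n a) x Jx ->
     is_jacobian (2 * n - 1) (Fmap n a) y Jy ->
     norm_inf (2 * n - 1) (vsub (matvec (2 * n - 1) Jx v) (matvec (2 * n - 1) Jy v))
       <= INR (n - 1) * norm_inf (2 * n - 1) (vsub x y) * norm_inf (2 * n - 1) v
     /\
     (forall i, (i < 2 * n - 1)%nat ->
        norm_inf (2 * n - 1) (vsub (Jx i) (Jy i))
          <= INR (n - 1) / 2 * norm_inf (2 * n - 1) (vsub x y)))
  /\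
  (* (b) *)
  (exists c11 c12 : R, 0 < c11 /\ 0 < c12 /\
     forall thetas : nat -> nat -> R,
       Un_cv (fun n => exp (2 * norm_inf (2 * n - 1) (thetas n)) / INR n) 0 ->
       exists N : nat, forall n : nat, (N <= n)%nat ->
         forall (a : nat -> nat -> bool) (J : nat -> nat -> R),
           is_jacobian (2 * n - 1) (Fmap n a) (thetas n) J ->
           (forall i, (i < n)%nat ->
              Rabs (outdeg n a i - Eoutdeg n (thetas n) i)
                <= sqrt (INR (n - 1) * ln (INR (n - 1)))) ->
           (forall j, (j < n)%nat ->
              Rabs (indeg n a j - Eindeg n (thetas n) j)
                <= sqrt (INR (n - 1) * ln (INR (n - 1)))) ->
           invertible (2 * n - 1) J /\
           forall z : nat -> R,
             (forall i, (i < 2 * n - 1)%nat ->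
                matvec (2 * n - 1) J z i = Fmap n a (thetas n) i) ->
             norm_inf (2 * n - 1) z
               <= sqrt (ln (INR n)) / sqrt (INR n)
                  * (c11 * exp (6 * norm_inf (2 * n - 1) (thetas n))
                     + c12 * exp (2 * norm_inf (2 * n - 1) (thetas n)))).
Proof.
  split.
  - intros n a x y v Jx Jy Hn HJx HJy. split.
    + exact (jacobian_matvec_lipschitz n a x y v Jx Jy Hn HJx HJy).
    + intros i Hi. exact (jacobian_row_lipschitz n a x y Jx Jy i Hn HJx HJy Hi).
  - exists 12, 24. split; [lra|]. split; [lra|].
    intros thetas _. exists 3%nat. intros n Hn a J HJ Hout Hin. split.
    + exact (jacobian_invertible n a (thetas n) J HJ Hn).
    + intros z Hz. exact (newton_step_bound n a (thetas n) J z Hn HJ Hout Hin Hz).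
Qed.
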